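(* Let $\zeta=e^{5\pi i/6}$ (a primitive $12$th root of unity) and $m^{I}=\begin{pmatrix}\frac23&-\frac7{12}\\-\frac7{12}&\frac23\end{pmatrix}$, $m^{II}=\begin{pmatrix}\frac23&-\frac34\\-\frac34&1\end{pmatrix}$, $m^{III}=\begin{pmatrix}\frac16&-\frac14\\-\frac14&1\end{pmatrix}$. Then the braidings $e^{i\pi m^{X}_{kl}}$ have diagrams: I: $q_{11}=q_{22}=-\zeta^2$, $q_{12}q_{21}=\zeta$, Cartan matrix $\begin{pmatrix}2&-2\\-2&2\end{pmatrix}$; II: $q_{11}=-\zeta^2$, $q_{22}=-1$, $q_{12}q_{21}=\zeta^3$, Cartan matrix $\begin{pmatrix}2&-2\\-1&2\end{pmatrix}$; III: $q_{11}=-\zeta^{-1}$, $q_{22}=-1$, $q_{12}q_{21}=-\zeta^3$, Cartan matrix $\begin{pmatrix}2&-3\\-1&2\end{pmatrix}$. Moreover $m^{II}$ is the reflection $\mathcal R^1$ of $m^I$ (new simple roots $-\alpha_1,\alpha_2+2\alpha_1$), $m^{III}=P^Tm^{II}P$ with $P=\begin{pmatrix}1&0\\1&-1\end{pmatrix}$ (the reflection of chamber II at its second simple root), and $m^I$ realises $q^I$; in these chambers every simple root is $m$-truncation except the first simple root of chamber III, which is $m$-Cartan.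
   Context: Let $q=(q_{ij})$ be a diagonal braiding matrix, $\chi$ the bicharacter on $\mathbb Z^n$ with $\chi(\alpha_i,\alpha_j)=q_{ij}$ on the standard basis. Its Cartan matrix has $a_{ii}=2$ and $a_{ij}=-\min\{s\in\mathbb Z_{\ge0}:q_{ii}^{-s}=q_{ij}q_{ji}\text{ or }q_{ii}^{s+1}=1\}$. The reflection $\mathcal R^k$ is $\alpha_i\mapsto\alpha_i-a_{ki}\alpha_k$; reflected braiding $\chi(\mathcal R^k\alpha_i,\mathcal R^k\alpha_j)$; for a real symmetric $m$ (Gram matrix of $(\cdot,\cdot)_m$), $\mathcal R^k(m)_{ij}=(\mathcal R^k\alpha_i,\mathcal R^k\alpha_j)_m$. Condition (A) for a pair $i\neq j$: $2m_{ij}=a_{ij}m_{ii}$; (B): $(1-a_{ij})m_{ii}=2$. $m$ realises $q$ if $e^{i\pi m_{ij}}=q_{ij}$, every pair satisfies (A) or (B), and this persists after any finite sequence of reflections (each using the current Cartan matrix). A simple root is $m$-Cartan if (A) holds for all pairs $(i,j)$, $j\ne i$, and $m$-truncation if (B) does. *)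

From HB Require Import structures.
From mathcomp Require Import all_boot all_order all_algebra all_field.
From Stdlib Require Import ClassicalEpsilon.
Set Implicit Arguments. Unset Strict Implicit. Unset Printing Implicit Defensive.
Import Order.TTheory GRing.Theory Num.Theory.
Local Open Scope ring_scope.

(* e^{i pi r} for rational r = p/d (d > 0): (e^{i pi/d})^p, where
   d.-root (-1) is the d-th root of -1 of minimal nonnegative argument,
   i.e. e^{i pi / d}. *)
Definition eipi (r : rat) : algC := ((`|denq r|%N).-root (-1)) ^ (numq r).

Definition cartan_pred n (q : 'M[algC]_n) (i j : 'I_n) : pred nat :=
  fun s => (q i i ^- s == q i j * q j i) || (q i i ^+ s.+1 == 1).

Definition cartan_finite n (q : 'M[algC]_n) : Prop :=
  forall i j : 'I_n, i != j -> exists s, cartan_pred q i j s.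

Definition cartan_s n (q : 'M[algC]_n) (i j : 'I_n) : nat :=
  match excluded_middle_informative (exists s, cartan_pred q i j s) with
  | left H => ex_minn H
  | right _ => 0%N
  end.

(* Cartan matrix: a_ii = 2, a_ij = - min{s : ...} (only meaningful when
   cartan_finite q holds). *)
Definition cartan n (q : 'M[algC]_n) : 'M[int]_n :=
  \matrix_(i, j) if i == j then 2 else - ((cartan_s q i j)%:Z).

(* bicharacter chi on Z^n with chi(alpha_i, alpha_j) = q_ij *)
Definition chi n (q : 'M[algC]_n) (a b : 'I_n -> int) : algC :=
  \prod_(i < n) \prod_(j < n) q i j ^ (a i * b j).

(* coordinates of R^k alpha_i = alpha_i - a_ki alpha_k *)
Definition refl_vec n (A : 'M[int]_n) (k i : 'I_n) : 'I_n -> int :=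
  fun l => (l == i)%:Z - A k i * (l == k)%:Z.

Definition refl_braid n (q : 'M[algC]_n) (A : 'M[int]_n) (k : 'I_n)
  : 'M[algC]_n :=
  \matrix_(i, j) chi q (refl_vec A k i) (refl_vec A k j).

Definition refl_gram n (m : 'M[rat]_n) (A : 'M[int]_n) (k : 'I_n)
  : 'M[rat]_n :=
  \matrix_(i, j) \sum_(l < n) \sum_(l' < n)
     ((refl_vec A k i l)%:~R * (refl_vec A k j l')%:~R * m l l').

Definition refl_step n (qm : 'M[algC]_n * 'M[rat]_n) (k : 'I_n) :=
  let A := cartan qm.1 in (refl_braid qm.1 A k, refl_gram qm.2 A k).

Definition refl_iter n (qm : 'M[algC]_n * 'M[rat]_n) (ks : seq 'I_n) :=
  foldl (@refl_step n) qm ks.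

Definition condA n (A : 'M[int]_n) (m : 'M[rat]_n) (i j : 'I_n) : Prop :=
  2 * m i j = (A i j)%:~R * m i i.
Definition condB n (A : 'M[int]_n) (m : 'M[rat]_n) (i j : 'I_n) : Prop :=
  (1 - (A i j)%:~R) * m i i = 2.

Definition realises n (m : 'M[rat]_n) (q : 'M[algC]_n) : Prop :=
  m^T = m /\
  (forall i j, eipi (m i j) = q i j) /\
  forall ks : seq 'I_n,
    let qm := refl_iter (q, m) ks in
    cartan_finite qm.1 /\
    forall i j, i != j -> condA (cartan qm.1) qm.2 i j \/
                          condB (cartan qm.1) qm.2 i j.

Definition braid_of n (m : 'M[rat]_n) : 'M[algC]_n :=
  \matrix_(i, j) eipi (m i j).

Definition m_cartan n (m : 'M[rat]_n) (i : 'I_n) : Prop :=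
  forall j, j != i -> condA (cartan (braid_of m)) m i j.
Definition m_truncation n (m : 'M[rat]_n) (i : 'I_n) : Prop :=
  forall j, j != i -> condB (cartan (braid_of m)) m i j.

Definition mx2 (R : Type) (a b c d : R) : 'M[R]_2 :=
  \matrix_(i < 2, j < 2)
    if (i : nat) == 0%N then (if (j : nat) == 0%N then a else b)
    else (if (j : nat) == 0%N then c else d).

Definition i1 : 'I_2 := ord0.
Definition i2 : 'I_2 := ord_max.

Definition zeta : algC := eipi (5%:R / 6%:R).

Definition mI : 'M[rat]_2 :=
  mx2 (2%:R/3%:R) (-(7%:R/12%:R)) (-(7%:R/12%:R)) (2%:R/3%:R).
Definition mII : 'M[rat]_2 :=
  mx2 (2%:R/3%:R) (-(3%:R/4%:R)) (-(3%:R/4%:R)) 1.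
Definition mIII : 'M[rat]_2 :=
  mx2 (1%:R/6%:R) (-(1%:R/4%:R)) (-(1%:R/4%:R)) 1.
Definition Pmx : 'M[rat]_2 := mx2 1 0 1 (-1).

From HB Require Import structures.
From mathcomp Require Import all_boot all_order all_algebra all_field.
From mathcomp Require Import ring.
From Stdlib Require Import ClassicalEpsilon FunctionalExtensionality.
Import Order.TTheory GRing.Theory Num.Theory.
Set Implicit Arguments. Unset Strict Implicit. Unset Printing Implicit Defensive.
Local Open Scope ring_scope.

(* Let [omega = 12.-root (-1) = e^{i pi/12}].  The extremal characterisation of
   [n.-root] shows that squaring [(2n).-root (-1)] gives [n.-root (-1)], and the
   cube root [(1 + i sqrt 3)/2] forces [omega] to be a primitive 24th root of
   unity; hence [d.-root (-1) = omega ^+ (12 / d)] for [d] dividing 12 and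
   [e^{i pi r} = omega ^ (12 r)] whenever [12 r] is an integer.  All braidings
   involved are then powers of [omega], the conditions defining the Cartan
   entries become congruences modulo 24, and the braiding of a reflected Gram
   matrix is the reflected braiding.  Reflecting chamber I repeatedly only
   produces five Gram matrices, each satisfying (A) or (B) at both pairs, which
   gives the realisation; everything else is a finite computation. *)

Section RootsOfMinusOne.
Variable C : numClosedFieldType.
Implicit Types x y z s : C.

Lemma rootC_unique n x y : (0 < n)%N -> y ^+ n = x -> 0 <= 'Im y ->
  (forall z, z ^+ n = x -> 0 <= 'Im z -> 'Re z <= 'Re y) -> n.-root x = y.
Proof.
move=> n_gt0 yn_x Im_y y_max; have rootK := rootCK n_gt0 x.
have [n_le1|n_gt1] := leqP n 1.
  move: yn_x; have -> : n = 1%N by apply/eqP; rewrite eqn_leq n_le1.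
  by rewrite root1C expr1.
set r := n.-root x in rootK *.
have ReE : 'Re r = 'Re y.
  by apply/le_anti; rewrite y_max ?rootC_Re_max ?Im_rootC_ge0.
have normE : `|r| = `|y|.
  by apply/eqP; rewrite -(eqrXn2 n_gt0) ?normr_ge0 // -!normrX rootK yn_x.
have ImE : 'Im r = 'Im y.
  apply/eqP; rewrite -(eqrXn2 (isT : (0 < 2)%N)) ?Im_rootC_ge0 //.
  apply/eqP/(@addrI _ ('Re y ^+ 2)).
  by rewrite -{1}ReE -!normC2_Re_Im normE.
by rewrite [r]Crect [y]Crect ReE ImE.
Qed.

Lemma norm_exprN1 n z : (0 < n)%N -> z ^+ n = -1 -> `|z| = 1.
Proof.
move=> n_gt0 zn; apply/eqP; rewrite -(eqrXn2 n_gt0) ?normr_ge0 // -normrX zn.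
by rewrite normrN normr1 expr1n.
Qed.

Lemma Re_sqr_norm1 s : `|s| = 1 -> 'Re (s ^+ 2) = 2 * 'Re s ^+ 2 - 1.
Proof.
move=> s1; have /esym := normC2_Re_Im s; rewrite s1 expr1n => ReIm.
by rewrite expr2 ReM -!expr2 -[X in _ = _ - X]ReIm; ring.
Qed.

Lemma exprN1_nreal n z : z ^+ n.*2 = -1 -> z \isn't Num.real.
Proof.
move=> zN1; apply/negP => /real_exprn_even_ge0/(_ (negbT (odd_double n))).
by rewrite zN1 oppr_ge0 ler10.
Qed.

Lemma eq_sqr_Im_ge0 x y : x \isn't Num.real -> x ^+ 2 = y ^+ 2 ->
  0 <= 'Im x -> 0 <= 'Im y -> x = y.
Proof.
move=> x_nreal /eqP; rewrite eqf_sqr => /orP[/eqP//|/eqP xNy] Im_x Im_y.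
move: x_nreal; rewrite xNy rpredN => /negP[]; apply/Creal_ImP/le_anti.
by rewrite Im_y -oppr_ge0 -raddfN -xNy Im_x.
Qed.

Lemma Im_mul_ge0 x y : 0 <= 'Re x -> 0 <= 'Im x -> 0 <= 'Re y -> 0 <= 'Im y ->
  0 <= 'Im (x * y).
Proof. by move=> *; rewrite ImM addr_ge0 ?mulr_ge0. Qed.

(* [- s^*] is the mirror image of [s] in the imaginary axis; it is again a
   root of [-1] of even order, so [(2n).-root (-1)] dominates [|'Re s|]. *)
Lemma norm_Re_le_root_doubleN1 n s : (0 < n)%N -> s ^+ n.*2 = -1 ->
  0 <= 'Im s -> `|'Re s| <= 'Re (n.*2.-root (-1 : C)).
Proof.
move=> n_gt0 sN1 Im_s; have n2_gt0 : (0 < n.*2)%N by rewrite double_gt0.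
rewrite real_ler_norml ?Creal_Re // rootC_Re_max // andbT lerNl.
have -> : - 'Re s = 'Re (- s^*) by rewrite raddfN /= Re_conj.
apply: rootC_Re_max => //; last by rewrite raddfN /= Im_conj opprK.
by rewrite -mul2n exprM sqrrN -exprM mul2n -rmorphXn sN1 rmorphN1.
Qed.

Lemma Re_root_doubleN1_ge0 n : (0 < n)%N -> 0 <= 'Re (n.*2.-root (-1 : C)).
Proof.
move=> n_gt0; have n2_gt1 : (1 < n.*2)%N by rewrite -addnn -addn1 leq_add.
apply: le_trans (normr_ge0 _) (norm_Re_le_root_doubleN1 n_gt0 _ _).
  exact: rootCK (ltnW n2_gt1) _.
exact: Im_rootC_ge0.
Qed.

Lemma sqr_root_doubleN1 n : (0 < n)%N ->
  (n.*2.-root (-1 : C)) ^+ 2 = n.-root (-1).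
Proof.
move=> n_gt0; set r := n.*2.-root (-1 : C).
have n2_gt0 : (0 < n.*2)%N by rewrite double_gt0.
have rN1 : r ^+ n.*2 = -1 by apply: rootCK.
have Im_r : 0 <= 'Im r by rewrite Im_rootC_ge0 // -addnn -addn1 leq_add.
have Re_r := Re_root_doubleN1_ge0 n_gt0.
symmetry; apply: rootC_unique => //.
- by rewrite -exprM mulnC muln2.
- by rewrite expr2 Im_mul_ge0.
move=> z zN1 Im_z; set s := sqrtC z.
have s2 : s ^+ 2 = z by apply: sqrtCK.
have sN1 : s ^+ n.*2 = -1 by rewrite -muln2 mulnC exprM s2.
rewrite -s2 !Re_sqr_norm1 ?(norm_exprN1 n2_gt0) // lerD2r ler_pM2l ?ltr0n //.
by rewrite -real_normK ?Creal_Re // !expr2 ler_pM ?normr_ge0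
  ?norm_Re_le_root_doubleN1 ?Im_rootC_ge0.
Qed.

(* [(1 + i sqrt 3)/2] is a cube root of [-1] in the upper half-plane. *)
Lemma Re_root3N1_ge_half : 2^-1 <= 'Re (3.-root (-1 : C)).
Proof.
set a : C := sqrtC 3.
have a2 : a ^+ 2 = 3 := sqrtCK 3.
have a_real : a \is Num.real by rewrite ger0_real // sqrtC_ge0 ler0n.
have half_real : (2 : C)^-1 \is Num.real by rewrite rpredV realn.
have cube : ((1 + 'i * a) / 2) ^+ 3 = -1.
  rewrite exprMn exprVn; apply: (mulIf (_ : (2 : C) ^+ 3 != 0)).
    by rewrite expf_neq0 ?pnatr_eq0.
  rewrite mulfVK ?expf_neq0 ?pnatr_eq0 //.
  have -> : (1 + 'i * a) ^+ 3 =
      1 + 3 * 'i * a + 3 * 'i ^+ 2 * a ^+ 2 + 'i ^+ 2 * 'i * a ^+ 2 * a by ring.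
  by rewrite sqrCi a2; ring.
have := rootC_Re_max (isT : (0 < 3)%N) cube.
rewrite ReMr // Re_rect ?rpred1 // mul1r; apply.
by rewrite ImMr // Im_rect ?rpred1 // mulr_ge0 ?sqrtC_ge0 ?invr_ge0 ?ler0n.
Qed.

End RootsOfMinusOne.

Definition omega : algC := 12.-root (-1).

Lemma omega12 : omega ^+ 12 = -1. Proof. exact: rootCK. Qed.

Lemma root6N1 : 6.-root (-1 : algC) = omega ^+ 2.
Proof. by rewrite -(sqr_root_doubleN1 _ (isT : (0 < 6)%N)). Qed.

Lemma root3N1 : 3.-root (-1 : algC) = omega ^+ 4.
Proof.
by rewrite -(sqr_root_doubleN1 _ (isT : (0 < 3)%N)) [_.*2.-root _]root6N1 -exprM.
Qed.

Lemma Re_omega_ge0 : 0 <= 'Re omega.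
Proof. exact: (Re_root_doubleN1_ge0 _ (isT : (0 < 6)%N)). Qed.

Lemma Re_omega2_ge0 : 0 <= 'Re (omega ^+ 2).
Proof. by rewrite -root6N1; exact: (Re_root_doubleN1_ge0 _ (isT : (0 < 3)%N)). Qed.

Lemma root2N1 : 2.-root (-1 : algC) = omega ^+ 6.
Proof.
apply: eq_sqr_Im_ge0; rewrite ?Im_rootC_ge0 //.
- exact: (exprN1_nreal (n := 1) (rootCK _ _)).
- by rewrite rootCK // -exprM omega12.
rewrite (exprD _ 2 4) -root6N1 -root3N1 Im_mul_ge0 ?Im_rootC_ge0 //.
  exact: (Re_root_doubleN1_ge0 _ (isT : (0 < 3)%N)).
by apply: le_trans (Re_root3N1_ge_half _); rewrite invr_ge0 ler0n.
Qed.

Lemma root4N1 : 4.-root (-1 : algC) = omega ^+ 3.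
Proof.
apply: eq_sqr_Im_ge0; rewrite ?Im_rootC_ge0 //.
- exact: (exprN1_nreal (n := 2) (rootCK _ _)).
- by rewrite (sqr_root_doubleN1 _ (isT : (0 < 2)%N)) root2N1 -exprM.
rewrite exprS Im_mul_ge0 ?Re_omega_ge0 ?Re_omega2_ge0 ?Im_rootC_ge0 //.
by rewrite -root6N1 Im_rootC_ge0.
Qed.

Lemma omega_prim : 24.-primitive_root omega.
Proof.
have omega24 : omega ^+ 24 = 1 by rewrite (exprM _ 12 2) omega12 sqrrN expr1n.
have [m m_prim m_dvd] := prim_order_exists (isT : (0 < 24)%N) omega24.
have m_ndvd12 : ~~ (m %| 12)%N.
  by rewrite (prim_order_dvd m_prim) omega12 (lt_eqF (lt_trans (ltrN10 _) ltr01)).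
have m_ndvd8 : ~~ (m %| 8)%N.
  rewrite (prim_order_dvd m_prim); apply/eqP => omega8.
  have omega4 : omega ^+ 4 = -1 by rewrite -omega12 (exprD _ 8 4) omega8 mul1r.
  have := Re_root3N1_ge_half algC; rewrite root3N1 omega4 (Creal_ReP _ _) ?rpredN1 //.
  by move/le_lt_trans/(_ (ltrN10 _)); rewrite lt_gtF // invr_gt0 ltr0n.
have : m \in [seq d <- divisors 24 | ~~ (d %| 12)%N && ~~ (d %| 8)%N].
  by rewrite mem_filter m_ndvd12 m_ndvd8 -dvdn_divisors.
by rewrite (_ : [seq d <- _ | _] = [:: 24%N]) // inE => /eqP <-.
Qed.

Lemma rootN1_omega d : (d %| 12)%N -> d.-root (-1 : algC) = omega ^+ (12 %/ d).
Proof.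
rewrite dvdn_divisors // (_ : divisors 12 = [:: 1; 2; 3; 4; 6; 12]%N) //.
case/predU1P=> [->|]; first by rewrite root1C omega12.
case/predU1P=> [->|]; first exact: root2N1.
case/predU1P=> [->|]; first exact: root3N1.
case/predU1P=> [->|]; first exact: root4N1.
case/predU1P=> [->|]; first exact: root6N1.
by rewrite orbF => /eqP->; rewrite expr1.
Qed.

Lemma omega_neq0 : omega != 0.
Proof. by rewrite (prim_root_eq0 omega_prim). Qed.

Lemma omega_expz_eq1 k : (omega ^ k == 1) = (24 %| k)%Z.
Proof.
rewrite dvdzE; case: k => n /=; first by rewrite -(prim_order_dvd omega_prim).
by rewrite invr_eq1 -(prim_order_dvd omega_prim).
Qed.

Lemma eq_omega_expz x y : (omega ^ x == omega ^ y) = (24 %| x - y)%Z.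
Proof.
have omega_y_neq0 : omega ^ y != 0 by rewrite expfz_neq0 ?omega_neq0.
rewrite -omega_expz_eq1 expfzDr ?omega_neq0 // -exprz_inv -expfV.
apply/eqP/eqP => [->|xy]; first by rewrite mulfV.
by rewrite -[omega ^ x](divfK omega_y_neq0) xy mul1r.
Qed.

Definition in_twelfths (r : rat) : bool := (`|denq r| %| 12)%N.

Definition twelfths (r : rat) : int := numq r * (12 %/ `|denq r|)%N.

Lemma twelfthsE r : in_twelfths r -> (twelfths r)%:~R = 12 * r.
Proof.
rewrite /in_twelfths /twelfths; set d := `|denq r|%N => d12.
have d_neq0 : d%:R != 0 :> rat by rewrite pnatr_eq0 absz_eq0 denq_neq0.
have denE : (denq r)%:~R = d%:R :> rat by rewrite -[in LHS](gtz0_abs (denq_gt0 r)).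
rewrite intrM -[r in RHS]divq_num_den denE -[12%N in RHS](divnK d12) natrM.
by field.
Qed.

Lemma eipi_twelfths r : in_twelfths r -> eipi r = omega ^ twelfths r.
Proof. by move=> r12; rewrite /eipi rootN1_omega // exprnP exprz_exp mulrC. Qed.

Section BraidingOfTwelfths.
Variables (n : nat) (m : 'M[rat]_n).
Hypothesis m12 : forall i j, in_twelfths (m i j).

Lemma braid_ofE i j : braid_of m i j = omega ^ twelfths (m i j).
Proof. by rewrite mxE eipi_twelfths. Qed.

Lemma chi_braid_of a b :
  chi (braid_of m) a b = omega ^ (\sum_i \sum_j twelfths (m i j) * (a i * b j)).
Proof.
have prod_omega I (r : seq I) (F : I -> int) :
    \prod_(i <- r) omega ^ F i = omega ^ (\sum_(i <- r) F i).
  elim: r => [|i r IHr]; first by rewrite !big_nil.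
  by rewrite !big_cons IHr expfzDr ?omega_neq0.
rewrite /chi -prod_omega; apply: eq_bigr => i _; rewrite -prod_omega.
by apply: eq_bigr => j _; rewrite braid_ofE exprz_exp.
Qed.

Lemma refl_braid_of (A : 'M[int]_n) k :
    (forall i j, in_twelfths (refl_gram m A k i j)) ->
  refl_braid (braid_of m) A k = braid_of (refl_gram m A k).
Proof.
move=> refl12; apply/matrixP => i j.
rewrite [LHS]mxE chi_braid_of [RHS]mxE eipi_twelfths //; congr (omega ^ _).
apply: (@intr_inj rat); rewrite twelfthsE // mxE rmorph_sum mulr_sumr.
apply: eq_bigr => l _; rewrite rmorph_sum mulr_sumr; apply: eq_bigr => l' _.
by rewrite -[LHS]/((_ * _)%:~R : rat) intrM twelfthsE // intrM; ring.
Qed.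

End BraidingOfTwelfths.

(* With [q_ii = omega^a] and [q_ij q_ji = omega^(b + c)], the two alternatives
   defining the Cartan entry become congruences modulo 24; [s = 23] always
   satisfies the second one. *)
Definition cartan_exp_pred (a b c : int) : pred nat :=
  fun s => (24 %| b + c + a * s%:Z)%Z || (24 %| a * s.+1%:Z)%Z.

Definition cartan_exp (a b c : int) : nat :=
  find (cartan_exp_pred a b c) (iota 0 24).

Lemma cartan_exp_pred23 a b c : cartan_exp_pred a b c 23.
Proof. by apply/orP; right; rewrite dvdz_mull. Qed.

Lemma ex_minn_cartan_exp a b c (ex_s : exists s, cartan_exp_pred a b c s) :
  ex_minn ex_s = cartan_exp a b c.
Proof.
have has_s : has (cartan_exp_pred a b c) (iota 0 24).
  by apply/hasP; exists 23%N; rewrite ?mem_iota ?cartan_exp_pred23.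
have lt_s24 : (cartan_exp a b c < 24)%N by rewrite -[24%N](size_iota 0) -has_find.
case: ex_minnP => s s_pred s_min; apply/eqP; rewrite eqn_leq s_min /=; last first.
  by have := nth_find 0%N has_s; rewrite nth_iota.
rewrite leqNgt; apply/negP => s_lt.
have := before_find 0%N s_lt; rewrite nth_iota ?s_pred //.
exact: ltn_trans s_lt lt_s24.
Qed.

Section CartanOfTwelfths.
Variables (n : nat) (m : 'M[rat]_n).
Hypothesis m12 : forall i j, in_twelfths (m i j).

Lemma cartan_pred_braid_of i j : cartan_pred (braid_of m) i j =1
  cartan_exp_pred (twelfths (m i i)) (twelfths (m i j)) (twelfths (m j i)).
Proof.
move=> s; rewrite /cartan_pred /cartan_exp_pred !braid_ofE //.
rewrite exprnN exprz_exp -expfzDr ?omega_neq0 // eq_omega_expz.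
rewrite exprnP exprz_exp omega_expz_eq1; congr (_ || _).
by rewrite -rpredN opprB mulrN opprK.
Qed.

Lemma cartan_finite_braid_of : cartan_finite (braid_of m).
Proof. by move=> i j _; exists 23%N; rewrite cartan_pred_braid_of cartan_exp_pred23. Qed.

Lemma cartan_braid_of : cartan (braid_of m) = \matrix_(i, j) if i == j then 2
  else - (cartan_exp (twelfths (m i i)) (twelfths (m i j)) (twelfths (m j i)))%:Z.
Proof.
apply/matrixP => i j; rewrite !mxE /cartan_s.
case: excluded_middle_informative => [ex_s|no_s]; last first.
  by case: no_s; exists 23%N; rewrite cartan_pred_braid_of cartan_exp_pred23.
by rewrite (eq_ex_minn ex_s (ex_intro _ 23%N (cartan_exp_pred23 _ _ _))
  (cartan_pred_braid_of i j)) ex_minn_cartan_exp.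
Qed.

End CartanOfTwelfths.

Lemma ord2P (i : 'I_2) : i = i1 \/ i = i2.
Proof. by case: i => [[|[|//]]] i_lt; [left|right]; apply: val_inj. Qed.

Section Mx2.
Variables (R : Type) (a b c d : R).
Lemma mx2_11 : mx2 a b c d i1 i1 = a. Proof. by rewrite mxE. Qed.
Lemma mx2_12 : mx2 a b c d i1 i2 = b. Proof. by rewrite mxE. Qed.
Lemma mx2_21 : mx2 a b c d i2 i1 = c. Proof. by rewrite mxE. Qed.
Lemma mx2_22 : mx2 a b c d i2 i2 = d. Proof. by rewrite mxE. Qed.
End Mx2.
Definition mx2E := (mx2_11, mx2_12, mx2_21, mx2_22).

Lemma trmx_mx2 (R : Type) (a b c d : R) : (mx2 a b c d)^T = mx2 a c b d.
Proof.
by apply/matrixP => i j; rewrite mxE; case: (ord2P i) => ->; case: (ord2P j) => ->;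
  rewrite !mx2E.
Qed.

Lemma sum_ord2 (V : nmodType) (F : 'I_2 -> V) : \sum_(l < 2) F l = F i1 + F i2.
Proof. by rewrite big_ord_recl big_ord1; congr (_ + F _); apply: val_inj. Qed.

Lemma mulmx_mx2 (R : pzRingType) (a b c d e f g h : R) :
  mx2 a b c d *m mx2 e f g h =
  mx2 (a * e + b * g) (a * f + b * h) (c * e + d * g) (c * f + d * h).
Proof.
apply/matrixP => i j; rewrite mxE sum_ord2.
by case: (ord2P i) => ->; case: (ord2P j) => ->; rewrite !mx2E.
Qed.

Lemma refl_gram_mx2_1 (a b c d : rat) (p q : int) :
  refl_gram (mx2 a b c d) (mx2 2 p q 2) i1 =
  mx2 a (p%:~R * a - b) (p%:~R * a - c) (p%:~R ^+ 2 * a - p%:~R * b - p%:~R * c + d).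
Proof.
apply/matrixP => i j; rewrite mxE !sum_ord2 /refl_vec !mx2E.
by case: (ord2P i) => ->; case: (ord2P j) => ->;
  rewrite !mx2E /= !intrD ?intrN !intrM /=; ring.
Qed.

Lemma refl_gram_mx2_2 (a b c d : rat) (p q : int) :
  refl_gram (mx2 a b c d) (mx2 2 p q 2) i2 =
  mx2 (a - q%:~R * b - q%:~R * c + q%:~R ^+ 2 * d) (q%:~R * d - b) (q%:~R * d - c) d.
Proof.
apply/matrixP => i j; rewrite mxE !sum_ord2 /refl_vec !mx2E.
by case: (ord2P i) => ->; case: (ord2P j) => ->;
  rewrite !mx2E /= !intrD ?intrN !intrM /=; ring.
Qed.

(* A symmetric Gram matrix [[a, b], [b, d]] is stored as the triple (a, b, d),
   on which the Cartan entries and the reflections are computable. *)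
Definition sgram := (rat * rat * rat)%type.

Definition sgram_mx (t : sgram) : 'M[rat]_2 :=
  let: (a, b, d) := t in mx2 a b b d.

Definition sgram_twelfths (t : sgram) : bool :=
  let: (a, b, d) := t in [&& in_twelfths a, in_twelfths b & in_twelfths d].

Definition sgram_cartan12 (t : sgram) : int :=
  let: (a, b, d) := t in - (cartan_exp (twelfths a) (twelfths b) (twelfths b))%:Z.

Definition sgram_cartan21 (t : sgram) : int :=
  let: (a, b, d) := t in - (cartan_exp (twelfths d) (twelfths b) (twelfths b))%:Z.

Definition sgram_refl1 (t : sgram) : sgram :=
  let: (a, b, d) := t in let p : rat := (sgram_cartan12 t)%:~R in
  (a, p * a - b, p ^+ 2 * a - p * b - p * b + d).

Definition sgram_refl2 (t : sgram) : sgram :=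
  let: (a, b, d) := t in let q : rat := (sgram_cartan21 t)%:~R in
  (a - q * b - q * b + q ^+ 2 * d, q * d - b, d).

Definition sgram_condAB (t : sgram) : bool :=
  let: (a, b, d) := t in
  let p : rat := (sgram_cartan12 t)%:~R in let q : rat := (sgram_cartan21 t)%:~R in
  ((2 * b == p * a) || ((1 - p) * a == 2)) && ((2 * b == q * d) || ((1 - q) * d == 2)).

Lemma sgram_mx_twelfths t : sgram_twelfths t -> forall i j, in_twelfths (sgram_mx t i j).
Proof.
case: t => [[a b] d] /and3P[a12 b12 d12] i j.
by case: (ord2P i) => ->; case: (ord2P j) => ->; rewrite !mx2E.
Qed.

Lemma cartan_sgram t : sgram_twelfths t ->
  cartan (braid_of (sgram_mx t)) = mx2 2 (sgram_cartan12 t) (sgram_cartan21 t) 2.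
Proof.
move=> /sgram_mx_twelfths t12; rewrite cartan_braid_of //.
apply/matrixP => i j; rewrite mxE; case: t t12 => [[a b] d] _.
by case: (ord2P i) => ->; case: (ord2P j) => ->; rewrite !mx2E.
Qed.

Lemma refl_gram_sgram t k : sgram_twelfths t ->
  refl_gram (sgram_mx t) (cartan (braid_of (sgram_mx t))) k =
  sgram_mx (if k == i1 then sgram_refl1 t else sgram_refl2 t).
Proof.
move=> t12; rewrite cartan_sgram //.
by case: (ord2P k) => ->; case: t {t12} => [[a b] d];
  rewrite ?refl_gram_mx2_1 ?refl_gram_mx2_2.
Qed.

Lemma condAB_sgram t : sgram_twelfths t -> sgram_condAB t ->
  forall i j, i != j ->
  condA (cartan (braid_of (sgram_mx t))) (sgram_mx t) i j \/
  condB (cartan (braid_of (sgram_mx t))) (sgram_mx t) i j.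
Proof.
move=> t12; rewrite cartan_sgram //; case: t {t12} => [[a b] d] /andP[AB12 AB21] i j.
rewrite /condA /condB.
by case: (ord2P i) => ->; case: (ord2P j) => ->; rewrite ?eqxx // !mx2E => _;
  [case/orP: AB12 | case/orP: AB21] => /eqP; [left|right|left|right].
Qed.

Definition tI : sgram := (2%:R/3%:R, -(7%:R/12%:R), 2%:R/3%:R).
Definition tII : sgram := (2%:R/3%:R, -(3%:R/4%:R), 1).
Definition tIII : sgram := (1%:R/6%:R, -(1%:R/4%:R), 1).

(* Starting from chamber I, reflections only ever reach these five Gram
   matrices (the last two are chambers II and III with the simple roots
   swapped). *)
Definition chambers : seq sgram :=
  [:: tI; tII; tIII; (1, -(3%:R/4%:R), 2%:R/3%:R); (1, -(1%:R/4%:R), 1%:R/6%:R)].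

Lemma chambers_closed : all (fun t => [&& sgram_twelfths t, sgram_condAB t,
  sgram_refl1 t \in chambers & sgram_refl2 t \in chambers]) chambers.
Proof. by vm_compute. Qed.

Definition chamber_pair (qm : 'M[algC]_2 * 'M[rat]_2) : Prop :=
  exists2 t, t \in chambers & qm = (braid_of (sgram_mx t), sgram_mx t).

Lemma chamber_pair_refl_step qm k : chamber_pair qm -> chamber_pair (refl_step qm k).
Proof.
case=> t t_in ->; have /and4P[t12 _ refl1_in refl2_in] := allP chambers_closed t t_in.
set t' := if k == i1 then sgram_refl1 t else sgram_refl2 t.
have t'_in : t' \in chambers by rewrite /t'; case: (k == i1).
have /and4P[t'12 _ _ _] := allP chambers_closed t' t'_in.
have t_mx12 := sgram_mx_twelfths t12; have t'_mx12 := sgram_mx_twelfths t'12.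
by exists t' => //; rewrite /refl_step /= refl_braid_of // ?refl_gram_sgram.
Qed.

Lemma realises_chamber t :
  t \in chambers -> realises (sgram_mx t) (braid_of (sgram_mx t)).
Proof.
move=> t_in; have /and4P[t12 _ _ _] := allP chambers_closed t t_in.
split; last split.
- by apply/matrixP => i j; case: t {t_in t12} => [[a b] d]; rewrite mxE;
    case: (ord2P i) => ->; case: (ord2P j) => ->; rewrite !mx2E.
- by move=> i j; rewrite mxE.
move=> ks; have : chamber_pair (braid_of (sgram_mx t), sgram_mx t) by exists t.
rewrite /refl_iter; elim: ks (braid_of (sgram_mx t), sgram_mx t) => [|k ks IHks] qm /=.
  case=> t' t'_in ->; have /and4P[t'12 AB _ _] := allP chambers_closed t' t'_in.
  by split; [exact/cartan_finite_braid_of/sgram_mx_twelfths | exact: condAB_sgram].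
by move=> /(chamber_pair_refl_step k); apply: IHks.
Qed.

Lemma zeta_omega : zeta = omega ^ 10.
Proof. by rewrite /zeta eipi_twelfths. Qed.

Lemma zeta_prim : 12.-primitive_root zeta.
Proof. by rewrite zeta_omega -exprnP; apply: (exp_prim_root omega_prim 10). Qed.

Lemma omegaM x y : omega ^ x * omega ^ y = omega ^ (x + y).
Proof. by rewrite expfzDr ?omega_neq0. Qed.

Lemma omegaV x : (omega ^ x)^-1 = omega ^ (- x).
Proof. by rewrite -exprz_inv expfV. Qed.

Lemma omegaX x k : (omega ^ x) ^+ k = omega ^ (x * k%:Z).
Proof. by rewrite exprnP exprz_exp. Qed.

Lemma N1_omega : -1 = omega ^ 12.
Proof. by rewrite -omega12. Qed.

Lemma omegaN x : - omega ^ x = omega ^ (x + 12).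
Proof. by rewrite -mulN1r N1_omega omegaM addrC. Qed.

Ltac omega_exponents :=
  rewrite ?zeta_omega ?N1_omega ?(omegaX, omegaV, omegaM, omegaN);
  apply/eqP; rewrite eq_omega_expz; vm_compute; reflexivity.

Lemma diagram_I : let qI := braid_of mI in
  [/\ qI i1 i1 = - zeta ^+ 2, qI i2 i2 = - zeta ^+ 2,
      qI i1 i2 * qI i2 i1 = zeta,
      cartan_finite qI & cartan qI = mx2 2 (-2) (-2) 2].
Proof.
have tI12 : sgram_twelfths tI by vm_compute.
have mI12 := sgram_mx_twelfths tI12.
have mIE : mI = sgram_mx tI by [].
move=> qI; rewrite {}/qI !(braid_ofE mI12) mIE (cartan_sgram tI12).
split; rewrite ?mx2E; try by omega_exponents.
  exact: cartan_finite_braid_of.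
by congr mx2; vm_compute.
Qed.

Lemma diagram_II : let qII := braid_of mII in
  [/\ qII i1 i1 = - zeta ^+ 2, qII i2 i2 = -1,
      qII i1 i2 * qII i2 i1 = zeta ^+ 3,
      cartan_finite qII & cartan qII = mx2 2 (-2) (-1) 2].
Proof.
have tII12 : sgram_twelfths tII by vm_compute.
have mII12 := sgram_mx_twelfths tII12.
have mIIE : mII = sgram_mx tII by [].
move=> qII; rewrite {}/qII !(braid_ofE mII12) mIIE (cartan_sgram tII12).
split; rewrite ?mx2E; try by omega_exponents.
  exact: cartan_finite_braid_of.
by congr mx2; vm_compute.
Qed.

Lemma diagram_III : let qIII := braid_of mIII in
  [/\ qIII i1 i1 = - zeta^-1, qIII i2 i2 = -1,
      qIII i1 i2 * qIII i2 i1 = - zeta ^+ 3,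
      cartan_finite qIII & cartan qIII = mx2 2 (-3) (-1) 2].
Proof.
have tIII12 : sgram_twelfths tIII by vm_compute.
have mIII12 := sgram_mx_twelfths tIII12.
have mIIIE : mIII = sgram_mx tIII by [].
move=> qIII; rewrite {}/qIII !(braid_ofE mIII12) mIIIE (cartan_sgram tIII12).
split; rewrite ?mx2E; try by omega_exponents.
  exact: cartan_finite_braid_of.
by congr mx2; vm_compute.
Qed.

Lemma reflections_I_II_III :
  [/\ refl_vec (cartan (braid_of mI)) i1 i1 = (fun l => - (l == i1)%:Z),
      refl_vec (cartan (braid_of mI)) i1 i2 = (fun l => (l == i2)%:Z + 2 * (l == i1)%:Z),
      mII = refl_gram mI (cartan (braid_of mI)) i1,
      mIII = Pmx^T *m mII *m Pmx &
      mIII = refl_gram mII (cartan (braid_of mII)) i2].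
Proof.
have [_ _ _ _ ->] := diagram_I; have [_ _ _ _ ->] := diagram_II.
split; try by apply: functional_extensionality => l; rewrite /refl_vec mx2E;
  case: (ord2P l) => ->.
- by rewrite refl_gram_mx2_1; congr mx2; apply/eqP; vm_compute.
- by rewrite trmx_mx2 !mulmx_mx2; congr mx2; apply/eqP; vm_compute.
- by rewrite refl_gram_mx2_2; congr mx2; apply/eqP; vm_compute.
Qed.

Lemma forall_neq_i1 (P : 'I_2 -> Prop) : (forall j, j != i1 -> P j) <-> P i2.
Proof. by split=> [|P2 j]; [apply | case: (ord2P j) => ->]. Qed.

Lemma forall_neq_i2 (P : 'I_2 -> Prop) : (forall j, j != i2 -> P j) <-> P i1.
Proof. by split=> [|P1 j]; [apply | case: (ord2P j) => ->]. Qed.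

Lemma simple_root_types :
  [/\ m_truncation mI i1, m_truncation mI i2,
      m_truncation mII i1, m_truncation mII i2 &
      [/\ m_truncation mIII i2, m_cartan mIII i1 & ~ m_truncation mIII i1]].
Proof.
have [_ _ _ _ cI] := diagram_I; have [_ _ _ _ cII] := diagram_II.
have [_ _ _ _ cIII] := diagram_III.
split; [apply/forall_neq_i1 | apply/forall_neq_i2 | apply/forall_neq_i1
  | apply/forall_neq_i2 | split; [apply/forall_neq_i2 | apply/forall_neq_i1 |]].
all: rewrite /condA /condB ?cI ?cII ?cIII ?mx2E; try by apply/eqP; vm_compute.
move/forall_neq_i1; rewrite /condB cIII !mx2E => /eqP; vm_compute; discriminate.
Qed.

Theorem mainTheorem12 :
  let qI := braid_of mI in
  let qII := braid_of mII in
  let qIII := braid_of mIII in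
  (
   12.-primitive_root zeta) /\
   [/\ qI i1 i1 = - zeta ^+ 2, qI i2 i2 = - zeta ^+ 2,
       qI i1 i2 * qI i2 i1 = zeta,
       cartan_finite qI & cartan qI = mx2 2 (-2) (-2) 2] /\
   [/\ qII i1 i1 = - zeta ^+ 2, qII i2 i2 = -1,
       qII i1 i2 * qII i2 i1 = zeta ^+ 3,
       cartan_finite qII & cartan qII = mx2 2 (-2) (-1) 2] /\
   [/\ qIII i1 i1 = - zeta^-1, qIII i2 i2 = -1,
       qIII i1 i2 * qIII i2 i1 = - zeta ^+ 3,
       cartan_finite qIII & cartan qIII = mx2 2 (-3) (-1) 2] /\
   [/\ refl_vec (cartan qI) i1 i1 = (fun l => - (l == i1)%:Z),
       refl_vec (cartan qI) i1 i2 = (fun l => (l == i2)%:Z + 2 * (l == i1)%:Z),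
       mII = refl_gram mI (cartan qI) i1,
       mIII = Pmx^T *m mII *m Pmx &
       mIII = refl_gram mII (cartan qII) i2] /\
   realises mI qI /\
   [/\ m_truncation mI i1, m_truncation mI i2,
       m_truncation mII i1, m_truncation mII i2 &
       [/\ m_truncation mIII i2, m_cartan mIII i1 & ~ m_truncation mIII i1]].
Proof.
move=> qI qII qIII.
split; first exact: zeta_prim.
split; first exact: diagram_I.
split; first exact: diagram_II.
split; first exact: diagram_III.
split; first exact: reflections_I_II_III.
split; last exact: simple_root_types.
exact: (realises_chamber (t := tI)).
Qed.
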